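(* Let $\beta=(\beta_j)_{j\ge0}$ be a sequence of positive numbers (or independent variables), let $\xi_{nk}=\xi_{nk}(\beta)$ be the Stirling polynomials of the second kind generated by $\beta$, and let $\xi^{(1)}_{nk}=\xi_{nk}(\beta^{(1)})$ where $\beta^{(1)}=(\beta_{1+j})_{j\ge0}$. For all $n\ge1$ and $0\le k\le n$, $$\xi_{nk}=\xi^{(1)}_{n-1,k-1}+\xi_{n-1,k}\,\beta_0 .$$
   Context: For a sequence $b=(b_j)_{j\ge0}$ and $\omega=(\varepsilon_1,\dots,\varepsilon_n)\in\{0,1\}^n$ define the weight $w_n(\omega)=\prod_{m=1}^n g_m$, where $g_m=1$ if $\varepsilon_m=0$ and $g_m=b_j$ if $\varepsilon_m=1$, with $j=\#\{l:1\le l\le m-1,\ \varepsilon_l=0\}$. For $n\ge1$, $0\le k\le n$, $\xi_{nk}(b)=\sum w_n(\omega)$ over all $\omega\in\{0,1\}^n$ with exactly $k$ zeros; $\xi_{00}(b)=1$ and $\xi_{nk}(b)=0$ if $k<0$ or $k>n$. *)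

From mathcomp Require Import all_boot all_order all_algebra.
Set Implicit Arguments. Unset Strict Implicit. Unset Printing Implicit Defensive.
Import GRing.Theory.
Local Open Scope ring_scope.

(* A word omega in {0,1}^n is encoded as w : {ffun 'I_n -> bool},
   with eps_{m+1} = 1 iff w m = true (positions are 0-indexed). *)

Definition zeros_before (n : nat) (w : {ffun 'I_n -> bool}) (m : nat) : nat :=
  #|[pred l : 'I_n | (l < m)%N && ~~ w l]|.

Definition nzeros (n : nat) (w : {ffun 'I_n -> bool}) : nat :=
  #|[pred l : 'I_n | ~~ w l]|.

Definition weight (R : comRingType) (b : nat -> R) (n : nat)
  (w : {ffun 'I_n -> bool}) : R :=
  \prod_(m < n) (if w m then b (zeros_before w m) else 1).

(* xi_{nk}(b); k is an integer so that xi_{nk} = 0 for k < 0 (and for k > n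
   the sum is empty); for n = 0 the sum reduces to xi_{00} = 1, xi_{0k} = 0. *)
Definition xi (R : comRingType) (b : nat -> R) (n : nat) (k : int) : R :=
  \sum_(w : {ffun 'I_n -> bool} | (nzeros w)%:Z == k) weight b w.

Definition shift1 (R : Type) (b : nat -> R) : nat -> R := fun j => b j.+1.

From mathcomp Require Import all_boot all_order all_algebra.
From mathcomp Require Import zify.
Set Implicit Arguments. Unset Strict Implicit.
Import GRing.Theory.
Local Open Scope ring_scope.

(* Split every word by its first letter.  A leading 1 has no zero before it,
   so it contributes the factor b_0 and leaves all later zero counts alone; a
   leading 0 contributes 1 and raises every later zero count by one, which
   replaces b by its shift b^(1) and removes one zero from the count. *)

Definition fcons n (x : bool) (w : {ffun 'I_n -> bool}) : {ffun 'I_n.+1 -> bool} :=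
  [ffun i : 'I_n.+1 => if unlift ord0 i is Some j then w j else x].

Lemma fcons0 n x (w : {ffun 'I_n -> bool}) : fcons x w ord0 = x.
Proof. by rewrite ffunE unlift_none. Qed.

Lemma fcons_lift n x (w : {ffun 'I_n -> bool}) j : fcons x w (lift ord0 j) = w j.
Proof. by rewrite ffunE liftK. Qed.

Lemma fcons_bij n :
  bijective (fun p : bool * {ffun 'I_n -> bool} => fcons p.1 p.2).
Proof.
exists (fun w : {ffun 'I_n.+1 -> bool} => (w ord0, [ffun j => w (lift ord0 j)])).
  by case=> x w /=; rewrite fcons0; congr pair; apply/ffunP => j; rewrite ffunE fcons_lift.
move=> w; apply/ffunP => i; rewrite ffunE.
by case: unliftP => [j ->|->] /=; rewrite ?ffunE.
Qed.

Lemma card_ord_recl n (P : pred 'I_n.+1) :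
  #|P| = (P ord0 + #|[pred j : 'I_n | P (lift ord0 j)]|)%N.
Proof.
rewrite -!sum1_card big_mkcond big_ord_recl [in RHS]big_mkcond /=.
by rewrite unfold_in; case: (P ord0).
Qed.

Lemma nzeros_fcons n x (w : {ffun 'I_n -> bool}) :
  nzeros (fcons x w) = (~~ x + nzeros w)%N.
Proof.
rewrite /nzeros card_ord_recl /= fcons0; congr (_ + _)%N.
by apply: eq_card => j; rewrite !inE fcons_lift.
Qed.

Lemma zeros_before_fcons0 n x (w : {ffun 'I_n -> bool}) :
  zeros_before (fcons x w) (@ord0 n) = 0%N.
Proof. by apply: eq_card0 => i; rewrite !inE. Qed.

Lemma zeros_before_fcons_lift n x (w : {ffun 'I_n -> bool}) (j : 'I_n) :
  zeros_before (fcons x w) (lift ord0 j) = (~~ x + zeros_before w j)%N.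
Proof.
rewrite /zeros_before card_ord_recl /= fcons0; congr (_ + _)%N.
by apply: eq_card => i; rewrite !inE fcons_lift /= /bump !add1n ltnS.
Qed.

Lemma weight_fcons (R : comRingType) (b : nat -> R) n x (w : {ffun 'I_n -> bool}) :
  weight b (fcons x w) = if x then b 0%N * weight b w else weight (shift1 b) w.
Proof.
rewrite /weight big_ord_recl fcons0 zeros_before_fcons0.
by case: x; rewrite ?mul1r; [congr (_ * _)|];
  apply: eq_bigr => j _; rewrite fcons_lift zeros_before_fcons_lift.
Qed.

Lemma xiS (R : comRingType) (b : nat -> R) n (k : int) :
  xi b n.+1 k = xi (shift1 b) n (k - 1) + xi b n k * b 0%N.
Proof.
rewrite /xi (reindex _ (onW_bij _ (@fcons_bij n))) /=.
rewrite -(pair_big_dep xpredT (fun x w => (nzeros (fcons x w))%:Z == k)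
   (fun x w => weight b (fcons x w))) /=.
rewrite big_bool /= addrC mulr_suml; congr (_ + _); apply: eq_big => w.
- by rewrite nzeros_fcons; apply/eqP/eqP; lia.
- by rewrite weight_fcons.
- by rewrite nzeros_fcons.
- by rewrite weight_fcons mulrC.
Qed.

Theorem theorem4p2 (R : comRingType) (beta : nat -> R) (n k : nat) :
  (1 <= n)%N -> (k <= n)%N ->
  xi beta n k%:Z = xi (shift1 beta) n.-1 (k%:Z - 1) + xi beta n.-1 k%:Z * beta 0%N.
Proof. by case: n => [//|n] _ _; exact: xiS. Qed.
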